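(* Let $\Gamma$ be a compact abelian group satisfying (G1)–(G3), and let $\Lambda$ be the topological $\mathbb{N}^{\times}$-graph with vertex set $\Gamma$, morphisms $(a,g)$ ($a\in\mathbb{N}^{\times}$, $g\in\Gamma$), $r(a,g)=g$, $s(a,g)=g^a$, $d(a,g)=a$ and composition $(a,g)(b,g^a)=(ab,g)$. (1) For $g\in\Gamma$ define $\mu_g:\Omega_{\mathbb{N}^{\times}}\to\Lambda$ by $\mu_g(a,b)=(a^{-1}b,g^a)$. Then $\mu_g\in\Lambda^\infty$, and for every $\beta\in\Lambda^\infty$ we have $\beta=\mu_{r(\beta)}$. (2) $\Lambda$ is aperiodic if and only if $\operatorname{int}(\operatorname{Tor}\Gamma)=\emptyset$.
   Context: $\mathbb{N}^{\times}$ is the multiplicative semigroup of positive integers; $\Gamma$ is written multiplicatively, $\omega_a(g)=g^a$, and (G1) $\omega_a(\Gamma)$ has finite index, (G2) $\ker\omega_a$ is finite, (G3) $|\ker\omega_{ab}|=|\ker\omega_a||\ker\omega_b|$ for all $a,b\in\mathbb{N}^{\times}$. $\Lambda^1=\Gamma$ denotes the vertex set; each $\{(a,g):g\in\Gamma\}$ is a compact open copy of $\Gamma$. $\Omega_{\mathbb{N}^{\times}}$ is the $\mathbb{N}^{\times}$-graph with vertex set $\mathbb{N}^{\times}$ and morphisms the pairs $(a,b)$ with $a\mid b$, range $a$, source $b$, degree $a^{-1}b$, composition $(a,b)(b,c)=(a,c)$. An infinite path with range $v$ is a degree-preserving continuous functor $\mu:\Omega_{\mathbb{N}^{\times}}\to\Lambda$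 with $\mu(1)=v$; $\Lambda^\infty$ is the set of infinite paths and $r(\mu)=\mu(1)$. For $m\in\mathbb{N}^{\times}$, $\tau^m(\mu)(a,b):=\mu(ma,mb)$. $\Lambda$ is aperiodic if for every nonempty open set $V\subseteq\Lambda^1$ there is $\mu\in\Lambda^\infty$ with $r(\mu)\in V$ such that $m\neq n$ implies $\tau^m(\mu)\neq\tau^n(\mu)$. $\operatorname{Tor}\Gamma$ is the subgroup of elements of finite order. *)

From HB Require Import structures.
From mathcomp Require Import all_boot all_order all_algebra.
From mathcomp Require Import all_classical all_reals all_analysis.
Set Implicit Arguments. Unset Strict Implicit. Unset Printing Implicit Defensive.
Import Order.TTheory GRing.Theory Num.Theory.
Local Open Scope classical_set_scope.
Local Open Scope ring_scope.

(* Gamma is written ADDITIVELY: g^a is  g *+ a,  the identity is 0. *)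
Section Lambda.
Variable G : topologicalZmodType.

Definition omega (a : nat) (g : G) : G := g *+ a.

Definition omega_img (a : nat) : set G := range (omega a).
Definition omega_ker (a : nat) : set G := [set g | omega a g = 0].

Definition finite_index (H : set G) : Prop :=
  exists s : seq G, forall g : G, exists2 x, x \in s & H (g - x).

Definition G1 : Prop := forall a : nat, (0 < a)%N -> finite_index (omega_img a).
Definition G2 : Prop := forall a : nat, (0 < a)%N -> finite_set (omega_ker a).
Definition G3 : Prop := forall a b : nat, (0 < a)%N -> (0 < b)%N ->
  (omega_ker (a * b) #= omega_ker a `*` omega_ker b)%card.

Definition lam_r (l : nat * G) : G := l.2.
Definition lam_s (l : nat * G) : G := omega l.1 l.2.
Definition lam_d (l : nat * G) : nat := l.1.
Definition lam_comp (l l' : nat * G) : nat * G := (l.1 * l'.1, l.2)%N.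
Definition lam_id (v : G) : nat * G := (1%N, v).

(* A functor mu : Omega_{N^x} -> Lambda is given by an object map
   [o : nat -> G] (on vertices a in N^x) and a morphism map
   [m : nat -> nat -> nat * G] (on morphisms (a,b), a | b).
   Omega_{N^x} carries the discrete topology, so continuity is automatic. *)
Definition is_inf_path (o : nat -> G) (m : nat -> nat -> nat * G) : Prop :=
  [/\ (forall a, (0 < a)%N -> m a a = lam_id (o a)),
      (forall a b, (0 < a)%N -> (a %| b)%N ->
         [/\ lam_d (m a b) = (b %/ a)%N,
             lam_r (m a b) = o a &
             lam_s (m a b) = o b]) &
      (forall a b c, (0 < a)%N -> (a %| b)%N -> (b %| c)%N ->
         lam_comp (m a b) (m b c) = m a c)].

Record inf_path := InfPath {
  ip_obj : nat -> G;
  ip_mor : nat -> nat -> nat * G }.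

Definition in_Lambda_inf (mu : inf_path) : Prop := is_inf_path (ip_obj mu) (ip_mor mu).

Definition ip_range (mu : inf_path) : G := ip_obj mu 1%N.

Definition ip_eq (mu nu : inf_path) : Prop :=
  (forall a, (0 < a)%N -> ip_obj mu a = ip_obj nu a) /\
  (forall a b, (0 < a)%N -> (a %| b)%N -> ip_mor mu a b = ip_mor nu a b).

Definition tau (k : nat) (mu : inf_path) : inf_path :=
  InfPath (fun a => ip_obj mu (k * a)%N) (fun a b => ip_mor mu (k * a)%N (k * b)%N).

Definition mu_of (g : G) : inf_path :=
  InfPath (fun a => omega a g) (fun a b => ((b %/ a)%N, omega a g)).

Definition aperiodic : Prop :=
  forall V : set G, open V -> V !=set0 ->
    exists mu : inf_path, [/\ in_Lambda_inf mu, V (ip_range mu) &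
      forall k n : nat, (0 < k)%N -> (0 < n)%N -> k <> n ->
        ~ ip_eq (tau k mu) (tau n mu)].

Definition Tor : set G := [set g | exists n : nat, (0 < n)%N /\ g *+ n = 0].

End Lambda.

From HB Require Import structures.
From mathcomp Require Import all_boot all_order all_algebra.
From mathcomp Require Import all_classical all_reals all_analysis.
Import GRing.Theory.
Local Open Scope classical_set_scope.
Local Open Scope ring_scope.

(* An infinite path is determined by its range g: the morphism (1, a) forces
   beta(a) = g^a, and then beta(a, b) has degree b/a and range g^a.  Hence
   tau^k beta = tau^n beta just says g^k = g^n, which for k != n means g is
   torsion; aperiodicity thus asks every nonempty open set to contain a
   non-torsion point, i.e. Tor Gamma has empty interior. *)

Lemma interior_eq0 (T : topologicalType) (A : set T) :
  A° = set0 <-> forall V, open V -> V !=set0 -> exists2 x, V x & ~ A x.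
Proof.
split=> [A0 V oV [x Vx]|meetC].
  apply: contrapT => VA; suff : (A°) x by rewrite A0.
  have VsubA : V `<=` A.
    by move=> y Vy; apply: contrapT => nAy; apply: VA; exists y.
  by move: VsubA; rewrite open_subsetE //; apply.
apply/seteqP; split=> // x Ax.
have [y Ay] := meetC _ (open_interior A) (ex_intro _ x Ax).
by case; exact: interior_subset.
Qed.

Section InfinitePaths.
Variable G : topologicalZmodType.
Implicit Types (g : G) (mu nu beta : inf_path G).

Lemma Tor_mulrn_eq g : Tor g <->
  exists k n, [/\ (0 < k)%N, (0 < n)%N, k <> n & g *+ k = g *+ n].
Proof.
split=> [[n [n0 gn]]|[k [n [k0 n0 kn gkn]]]].
  exists 1%N, n.+1; split=> //; first by case=> n_eq0; rewrite -n_eq0 in n0.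
  by rewrite [RHS]mulrSr gn add0r.
wlog lt_kn : k n k0 n0 kn gkn / (k < n)%N.
  move=> wl; case: (ltngtP k n) => [|lt_nk|//]; first exact: wl.
  by apply: (wl n k) => // nk; apply: kn.
exists (n - k)%N; split; first by rewrite subn_gt0.
by rewrite mulrnBr ?(ltnW lt_kn) // gkn subrr.
Qed.

Lemma mu_of_inf_path g : in_Lambda_inf (mu_of g).
Proof.
split=> [a a0|a b a0 ab|a b c a0 /dvdnP[j ->] /dvdnP[k ->]] /=.
- by rewrite divnn a0.
- by split=> //; rewrite /lam_s /omega /= -mulrnA mulnC divnK.
- rewrite /lam_comp /=; have [->|j0] := posnP j.
    by rewrite !(mul0n, muln0, div0n).
  by rewrite mulnK // mulnK ?muln_gt0 ?j0 // mulnA mulnK // mulnC.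
Qed.

Lemma ip_range_mu_of g : ip_range (mu_of g) = g.
Proof. exact: mulr1n. Qed.

Lemma inf_path_mu_of beta : in_Lambda_inf beta -> ip_eq beta (mu_of (ip_range beta)).
Proof.
case=> _ mor_beta _.
have obj_beta a : (0 < a)%N -> ip_obj beta a = omega a (ip_range beta).
  move=> a0; have [d r s] := mor_beta 1%N a isT (dvd1n a).
  rewrite /lam_d divn1 in d.
  by rewrite -s /ip_range -r /lam_s /lam_r d.
split=> // a b a0 ab; have [d r _] := mor_beta a b a0 ab.
by rewrite /= -obj_beta // -d -r; case: (ip_mor beta a b).
Qed.

Lemma ip_eq_sym {mu nu} : ip_eq mu nu -> ip_eq nu mu.
Proof. by case=> obj mor; split=> *; [rewrite obj | rewrite mor]. Qed.

Lemma ip_eq_trans {mu nu} {xi : inf_path G} :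
  ip_eq mu nu -> ip_eq nu xi -> ip_eq mu xi.
Proof.
move=> [obj1 mor1] [obj2 mor2].
by split=> *; [rewrite obj1 ?obj2 | rewrite mor1 ?mor2].
Qed.

Lemma ip_eq_tau {k mu nu} : (0 < k)%N -> ip_eq mu nu -> ip_eq (tau k mu) (tau k nu).
Proof.
move=> k0 [obj mor]; split=> [a a0|a b a0 ab] /=.
  by rewrite obj ?muln_gt0 ?k0.
by rewrite mor ?muln_gt0 ?k0 ?dvdn_pmul2l.
Qed.

Lemma ip_eq_tau_mu_of g k n : (0 < k)%N -> (0 < n)%N ->
  ip_eq (tau k (mu_of g)) (tau n (mu_of g)) <-> g *+ k = g *+ n.
Proof.
move=> k0 n0; split=> [[obj _]|gkn].
  by have := obj 1%N isT; rewrite /= /omega !muln1.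
have gka a : omega (k * a) g = omega (n * a) g by rewrite /omega !mulrnA gkn.
split=> [a a0|a b a0 ab] /=; first exact: gka.
by rewrite !divnMl // gka.
Qed.

Lemma inf_path_aperiodicE {beta} : in_Lambda_inf beta ->
  (forall k n, (0 < k)%N -> (0 < n)%N -> k <> n ->
     ~ ip_eq (tau k beta) (tau n beta)) <-> ~ Tor (ip_range beta).
Proof.
move=> /inf_path_mu_of beta_mu.
have tauE k n : (0 < k)%N -> (0 < n)%N -> ip_eq (tau k beta) (tau n beta) <->
    ip_range beta *+ k = ip_range beta *+ n.
  move=> k0 n0; rewrite -ip_eq_tau_mu_of //; split=> e.
    apply: ip_eq_trans (ip_eq_tau k0 (ip_eq_sym beta_mu)) _.
    exact: ip_eq_trans e (ip_eq_tau n0 beta_mu).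
  apply: ip_eq_trans (ip_eq_tau k0 beta_mu) _.
  exact: ip_eq_trans e (ip_eq_tau n0 (ip_eq_sym beta_mu)).
rewrite Tor_mulrn_eq; split=> [aper [k [n [k0 n0 kn gkn]]]|notTor k n k0 n0 kn].
  by apply: (aper k n k0 n0 kn); apply/tauE.
by move/(tauE k n k0 n0) => gkn; apply: notTor; exists k, n.
Qed.

Lemma aperiodicE : aperiodic G <->
  forall V : set G, open V -> V !=set0 -> exists2 g, V g & ~ Tor g.
Proof.
split=> [aper V oV V0|meetC V oV V0].
  have [mu [mu_inf Vmu mu_aper]] := aper V oV V0.
  by exists (ip_range mu); last exact/(inf_path_aperiodicE mu_inf).
have [g Vg notTor] := meetC V oV V0.
exists (mu_of g); split; first exact: mu_of_inf_path.
  by rewrite ip_range_mu_of.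
by apply/(inf_path_aperiodicE (mu_of_inf_path g)); rewrite ip_range_mu_of.
Qed.

End InfinitePaths.

Theorem lemma3p6 (G : topologicalZmodType) :
  compact [set: G] -> hausdorff_space G ->
  G1 G -> G2 G -> G3 G ->
  ((forall g : G, in_Lambda_inf (mu_of g)) /\
   (forall beta : inf_path G, in_Lambda_inf beta ->
      ip_eq beta (mu_of (ip_range beta)))) /\
  (aperiodic G <-> interior (@Tor G) = set0).
Proof.
move=> _ _ _ _ _; split.
  by split; [exact: mu_of_inf_path | exact: inf_path_mu_of].
by rewrite interior_eq0; exact: aperiodicE.
Qed.
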